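(* There exist absolute constants $a,b>0$ such that the following holds. Let $A$ be a finite multiset of $n$ points in $\mathbb{R}^d$ and $\varepsilon,\delta\in(0,1)$. Let $k=b\log\delta^{-1}$ and, for $i=1,\dots,k$, let $\hat\mu_i$ be the average of $a\varepsilon^{-1}$ points drawn independently and uniformly at random from $A$ (all draws independent). Then, with probability at least $1-\delta$, every geometric median $m\in\arg\min_{c\in\mathbb{R}^d}\sum_{i=1}^{k}\|\hat\mu_i-c\|$ is a $(1+\varepsilon)$-approximate mean of $A$.
   Context: For a finite multiset $A\subset\mathbb{R}^d$, let $\mathrm{Opt}=\min_{x\in\mathbb{R}^d}\sum_{p\in A}\|p-x\|^2$ (Euclidean norm). A point $x$ is a $(1+\varepsilon)$-approximate mean of $A$ if $\sum_{p\in A}\|p-x\|^2\le(1+\varepsilon)\mathrm{Opt}$. Integrality of $k$ and $a\varepsilon^{-1}$ is ignored. *)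

From HB Require Import structures.
From mathcomp Require Import all_boot all_order all_algebra.
From mathcomp Require Import boolp reals exp Rstruct.
Set Implicit Arguments. Unset Strict Implicit. Unset Printing Implicit Defensive.
Import Order.TTheory GRing.Theory Num.Theory.
Local Open Scope ring_scope.

Notation RR := Rdefinitions.R.

Definition enorm (d : nat) (v : 'rV[RR]_d) : RR :=
  Num.sqrt (\sum_(i < d) v 0 i ^+ 2).

Definition kmeans_cost (n d : nat) (A : 'I_n -> 'rV[RR]_d) (x : 'rV[RR]_d) : RR :=
  \sum_(p < n) enorm (A p - x) ^+ 2.

Definition approx_mean (n d : nat) (A : 'I_n -> 'rV[RR]_d) (eps : RR)
    (x : 'rV[RR]_d) : Prop :=
  forall y : 'rV[RR]_d, kmeans_cost A x <= (1 + eps) * kmeans_cost A y.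

Definition is_geometric_median (k d : nat) (mu : 'I_k -> 'rV[RR]_d)
    (m : 'rV[RR]_d) : Prop :=
  forall c : 'rV[RR]_d,
    \sum_(i < k) enorm (mu i - m) <= \sum_(i < k) enorm (mu i - c).

(* Integer rounding of a positive real quantity (integrality is ignored in
   the paper; we round up). *)
Definition rceil (x : RR) : nat := `|Num.ceil x|%N.

(* Sample space: the index of the j-th point drawn for the i-th average;
   uniform measure on this finite type = independent uniform draws. *)
Definition samples (k s n : nat) := {ffun 'I_k * 'I_s -> 'I_n}.

Definition emp_mean (n d k s : nat) (A : 'I_n -> 'rV[RR]_d)
    (w : samples k s n) (i : 'I_k) : 'rV[RR]_d :=
  (s%:R)^-1 *: \sum_(j < s) A (w (i, j)).

Definition uprob (T : finType) (E : T -> Prop) : RR :=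
  (#|[set w : T | `[< E w >]]|%:R) / (#|T|%:R).

From HB Require Import structures.
From mathcomp Require Import all_boot all_order all_algebra.
From mathcomp Require Import boolp reals exp Rstruct.
From mathcomp Require Import ring lra zify.
Set Implicit Arguments. Unset Strict Implicit. Unset Printing Implicit Defensive.
Import Order.TTheory GRing.Theory Num.Theory.
Local Open Scope ring_scope.

(* Let mu be the mean of A and Opt its cost. Since cost(x) = Opt + n |x - mu|^2,
   it suffices that the geometric median lies within sqrt (eps Opt / n) of mu.
   An average of s uniform samples has E |avg - mu|^2 = Opt / (n s), so by
   Markov it is farther than rho = sqrt (eps Opt / (16 n)) from mu with
   probability at most 16 / (eps s) <= 2^-12 once s >= 2^16 / eps.  A geometric
   median of k points lies within 4 rho of any point that is within rho of more
   than three quarters of them, and a Chernoff bound (exponential moment with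
   base 2^12) shows that a quarter of the k averages are far with probability
   at most 4^-k <= delta once k >= ln (1 / delta). *)

Section Dot.
Variable d : nat.
Implicit Types (u v w : 'rV[RR]_d) (a : RR).

Definition dot u v : RR := \sum_(i < d) u 0 i * v 0 i.

Lemma dotC u v : dot u v = dot v u.
Proof. by apply: eq_bigr => i _; rewrite mulrC. Qed.

Lemma dot0l v : dot 0 v = 0.
Proof. by rewrite /dot big1 // => i _; rewrite mxE mul0r. Qed.

Lemma dotDl u v w : dot (u + v) w = dot u w + dot v w.
Proof. by rewrite /dot -big_split; apply: eq_bigr => i _; rewrite mxE mulrDl. Qed.

Lemma dotDr u v w : dot u (v + w) = dot u v + dot u w.
Proof. by rewrite !(dotC u) dotDl. Qed.

Lemma dot_suml (I : Type) (r : seq I) (P : pred I) (X : I -> 'rV[RR]_d) v :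
  dot (\sum_(i <- r | P i) X i) v = \sum_(i <- r | P i) dot (X i) v.
Proof.
rewrite /dot exchange_big; apply: eq_bigr => j _.
by rewrite summxE mulr_suml.
Qed.

Lemma dot_sumr (I : Type) (r : seq I) (P : pred I) (X : I -> 'rV[RR]_d) u :
  dot u (\sum_(i <- r | P i) X i) = \sum_(i <- r | P i) dot u (X i).
Proof. by rewrite dotC dot_suml; apply: eq_bigr => i _; rewrite dotC. Qed.

Lemma enorm_ge0 v : 0 <= enorm v.
Proof. exact: sqrtr_ge0. Qed.

Lemma enorm_sqr v : enorm v ^+ 2 = dot v v.
Proof.
have -> : dot v v = \sum_(i < d) v 0 i ^+ 2 by apply: eq_bigr => i _; rewrite expr2.
by rewrite /enorm sqr_sqrtr // sumr_ge0 // => i _; rewrite sqr_ge0.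
Qed.

Lemma enormZ a v : enorm (a *: v) = `|a| * enorm v.
Proof.
rewrite /enorm -sqrtr_sqr -sqrtrM ?sqr_ge0 // mulr_sumr.
by congr Num.sqrt; apply: eq_bigr => i _; rewrite mxE exprMn.
Qed.

Lemma enormN v : enorm (- v) = enorm v.
Proof. by rewrite -scaleN1r enormZ normrN normr1 mul1r. Qed.

Lemma enormBC u v : enorm (u - v) = enorm (v - u).
Proof. by rewrite -enormN opprB. Qed.

Lemma cauchy_schwarz u v : dot u v ^+ 2 <= dot u u * dot v v.
Proof.
pose P i j := u 0 i * u 0 i * (v 0 j * v 0 j).
pose Q i j := u 0 i * v 0 i * (u 0 j * v 0 j).
have lagrange : \sum_(i < d) \sum_(j < d) (u 0 i * v 0 j - u 0 j * v 0 i) ^+ 2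
    = \sum_(i < d) \sum_(j < d) P i j + \sum_(i < d) \sum_(j < d) P j i
      - 2 * \sum_(i < d) \sum_(j < d) Q i j.
  rewrite mulr_sumr -!big_split -sumrB /=; apply: eq_bigr => i _.
  rewrite mulr_sumr -!big_split -sumrB /=; apply: eq_bigr => j _.
  by rewrite /P /Q; ring.
have sym : \sum_(i < d) \sum_(j < d) P j i = \sum_(i < d) \sum_(j < d) P i j.
  exact: exchange_big.
have : 0 <= \sum_(i < d) \sum_(j < d) (u 0 i * v 0 j - u 0 j * v 0 i) ^+ 2.
  by apply: sumr_ge0 => i _; apply: sumr_ge0 => j _; apply: sqr_ge0.
by rewrite lagrange sym /P /Q -!big_distrlr /= -/(dot u u) -/(dot v v) -/(dot u v); lra.
Qed.

Lemma ler_dot_enorm u v : dot u v <= enorm u * enorm v.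
Proof.
apply: le_trans (ler_norm _) _.
rewrite -(ler_pXn2r (n := 2)) ?nnegrE ?normr_ge0 ?mulr_ge0 ?enorm_ge0 //.
by rewrite real_normK ?num_real // exprMn !enorm_sqr cauchy_schwarz.
Qed.

Lemma enormD_sqr u v :
  enorm (u + v) ^+ 2 = enorm u ^+ 2 + 2 * dot u v + enorm v ^+ 2.
Proof. by rewrite !enorm_sqr dotDl !dotDr [dot v u]dotC; ring. Qed.

Lemma enormD u v : enorm (u + v) <= enorm u + enorm v.
Proof.
rewrite -(ler_pXn2r (n := 2)) ?nnegrE ?addr_ge0 ?enorm_ge0 //.
by rewrite enormD_sqr sqrrD; have := ler_dot_enorm u v; lra.
Qed.

Lemma enorm_triangle u v w : enorm (u - w) <= enorm (u - v) + enorm (v - w).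
Proof. by rewrite -(subrKA v); apply: enormD. Qed.

End Dot.

Lemma sum_nat_indicator (T : finType) (A : {set T}) : (\sum_x (x \in A) = #|A|)%N.
Proof.
by rewrite -sum1_card [RHS]big_mkcond; apply: eq_bigr => x _; case: (x \in A).
Qed.

Lemma geometric_median_near k d (mu : 'I_k -> 'rV[RR]_d) (m c : 'rV[RR]_d) (rho : RR) :
  is_geometric_median mu m ->
  (4 * #|[set i | (rho < enorm (mu i - c))%R]| < k)%N ->
  enorm (m - c) <= 4 * rho.
Proof.
move=> median few_far; set D := enorm (m - c).
set far := [set i | (rho < enorm (mu i - c))%R].
have D_ge0 : 0 <= D by apply: enorm_ge0.
(* each near point gains at least D - 2 rho, each far point loses at most D *)
have gap i : D - 2 * rho - (2 * D - 2 * rho) * (i \in far)%:R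
    <= enorm (mu i - m) - enorm (mu i - c).
  have := enorm_triangle m (mu i) c; have := enorm_triangle (mu i) m c.
  rewrite [enorm (m - mu i)]enormBC -/D inE.
  by case: ltP => /= far_or_near; rewrite ?mulr1n ?mulr0n; lra.
have : \sum_(i < k) (D - 2 * rho - (2 * D - 2 * rho) * (i \in far)%:R)
    <= \sum_(i < k) (enorm (mu i - m) - enorm (mu i - c)).
  by apply: ler_sum => i _; apply: gap.
rewrite !sumrB !sumr_const !card_ord -mulr_sumr -natr_sum sum_nat_indicator.
rewrite -(mulr_natl D) -(mulr_natl (2 * rho)).
have := median c; set B := #|far| in few_far *.
have : 4 * B%:R + 1 <= k%:R :> RR by rewrite -natrM natr1 ler_nat.
have : 0 <= B%:R :> RR by [].
move: (k%:R) (B%:R) => K b b_ge0 few sums bound.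
have key : D * (K - 2 * b) <= 2 * rho * (K - b) by lra.
have K2b_gt0 : 0 < K - 2 * b by lra.
have rho_ge0 : 0 <= rho.
  have : 0 <= rho * (K - b) by have := mulr_ge0 D_ge0 (ltW K2b_gt0); lra.
  by rewrite pmulr_lge0 //; lra.
rewrite -(ler_pM2r K2b_gt0).
have : 0 <= rho * (2 * K - 6 * b) by rewrite mulr_ge0 //; lra.
lra.
Qed.

Section SumsOverFunctions.
Variables (R : comPzRingType) (I J : finType).

Lemma sum_ffun_app (i : I) (G : J -> R) :
  \sum_(f : {ffun I -> J}) G (f i) = (\sum_j G j) * #|J|%:R ^+ #|I|.-1.
Proof.
transitivity (\sum_(f : {ffun I -> J}) \prod_i' (if i' == i then G (f i') else 1)).
  by apply: eq_bigr => f _; rewrite (bigD1 i) //= eqxx big1 ?mulr1 // => i' /negbTE ->.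
rewrite -(bigA_distr_bigA (fun i' j => if i' == i then G j else 1)) (bigD1 i) //= eqxx.
congr (_ * _); rewrite (eq_bigr (fun _ => #|J|%:R)) ?prodr_const ?cardC1 // => i' /negbTE ->.
by rewrite sumr_const.
Qed.

Lemma sum_ffun_app2 (i i' : I) (G H : J -> R) : i != i' -> \sum_j G j = 0 ->
  \sum_(f : {ffun I -> J}) G (f i) * H (f i') = 0.
Proof.
move=> neq_ii' G_sum0.
pose F i'' j := if i'' == i then G j else if i'' == i' then H j else 1.
transitivity (\sum_(f : {ffun I -> J}) \prod_i'' F i'' (f i'')).
  apply: eq_bigr => f _; rewrite (bigD1 i) // (bigD1 i') 1?eq_sym //= /F eqxx.
  by rewrite eq_sym (negbTE neq_ii') eqxx big1 ?mulr1 // => i'' /andP[/negbTE -> /negbTE ->].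
by rewrite -bigA_distr_bigA (bigD1 i) //= /F eqxx G_sum0 mul0r.
Qed.

End SumsOverFunctions.

(* The identity E |X_1 + ... + X_m|^2 = m E |X|^2 for i.i.d. centred X,
   written as a sum over all outcomes f : I -> J. *)
Lemma sum_ffun_enorm_sum_centered (I J : finType) d (X : J -> 'rV[RR]_d) :
  \sum_j X j = 0 ->
  \sum_(f : {ffun I -> J}) enorm (\sum_i X (f i)) ^+ 2
    = #|I|%:R * #|J|%:R ^+ #|I|.-1 * \sum_j enorm (X j) ^+ 2.
Proof.
move=> X_centered.
have cross i i' : i != i' -> \sum_(f : {ffun I -> J}) dot (X (f i)) (X (f i')) = 0.
  move=> neq_ii'; rewrite /dot exchange_big big1 //= => c _.
  rewrite (@sum_ffun_app2 _ _ _ i i' (fun j => X j 0 c) (fun j => X j 0 c) neq_ii') //.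
  by have := congr1 (fun M : 'rV_d => M 0 c) X_centered; rewrite summxE mxE.
have expand (f : {ffun I -> J}) :
    enorm (\sum_i X (f i)) ^+ 2 = \sum_i \sum_i' dot (X (f i)) (X (f i')).
  by rewrite enorm_sqr dot_suml; apply: eq_bigr => i _; rewrite dot_sumr.
have diag i : \sum_(f : {ffun I -> J}) \sum_i' dot (X (f i)) (X (f i'))
    = #|J|%:R ^+ #|I|.-1 * \sum_j enorm (X j) ^+ 2.
  rewrite exchange_big (bigD1 i) //= [X in _ + X]big1 ?addr0; last first.
    by move=> i' neq_i'i; apply: cross; rewrite eq_sym.
  rewrite (sum_ffun_app i (fun j => dot (X j) (X j))) mulrC.
  by congr (_ * _); apply: eq_bigr => j _; rewrite enorm_sqr.
rewrite (eq_bigr _ (fun f _ => expand f)) exchange_big /= (eq_bigr _ (fun i _ => diag i)).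
by rewrite sumr_const -[RHS]mulrA mulr_natl.
Qed.

Lemma card_markov (T : finType) (f : T -> RR) (c : RR) :
  0 < c -> (forall x, 0 <= f x) -> #|[set x | \sum_y f y < c * f x]|%:R <= c.
Proof.
move=> c_gt0 f_ge0; set S := \sum_y f y; set P := [set x | S < c * f x].
have f_le_S x : f x <= S.
  by rewrite /S (bigD1 x) //= lerDl sumr_ge0.
have [S_le0 | S_gt0] := leP S 0.
  have S0 : S = 0 by apply/eqP; rewrite eq_le S_le0 sumr_ge0.
  suff -> : P = set0 by rewrite cards0 ltW.
  apply/setP => x; rewrite !inE; apply/negbTE; rewrite -leNgt.
  by have := f_le_S x; have := f_ge0 x; rewrite S0; nra.
rewrite -(ler_pM2r S_gt0) mulr_natl -sumr_const.
apply: (@le_trans _ _ (\sum_(x in P) c * f x)).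
  by apply: ler_sum => x; rewrite inE => /ltW.
rewrite -mulr_sumr; apply: ler_wpM2l; first exact: ltW.
by rewrite big_mkcond /S; apply: ler_sum => x _; case: ifP.
Qed.

Section MeanAndCost.
Variables (n d : nat) (A : 'I_n -> 'rV[RR]_d).
Hypothesis n_gt0 : (0 < n)%N.

Definition mean : 'rV[RR]_d := n%:R^-1 *: \sum_(p < n) A p.

Local Notation opt := (kmeans_cost A mean).

Lemma opt_ge0 : 0 <= opt.
Proof. by apply: sumr_ge0 => p _; apply: sqr_ge0. Qed.

Lemma sum_subr_mean : \sum_(p < n) (A p - mean) = 0.
Proof.
rewrite sumrB sumr_const card_ord -scaler_nat /mean scalerA mulfV ?scale1r ?subrr //.
by rewrite pnatr_eq0 -lt0n.
Qed.

Lemma kmeans_cost_mean x : kmeans_cost A x = opt + n%:R * enorm (x - mean) ^+ 2.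
Proof.
have expand p : enorm (A p - x) ^+ 2
    = enorm (A p - mean) ^+ 2 + 2 * dot (A p - mean) (mean - x) + enorm (x - mean) ^+ 2.
  by rewrite -(subrKA mean (A p)) (enormD_sqr (A p - mean)) [enorm (mean - x)]enormBC.
rewrite /kmeans_cost (eq_bigr _ (fun p _ => expand p)) !big_split /=.
by rewrite -mulr_sumr -dot_suml sum_subr_mean dot0l mulr0 addr0 sumr_const card_ord mulr_natl.
Qed.

Lemma approx_mean_of_near eps m : 0 <= eps ->
  n%:R * enorm (m - mean) ^+ 2 <= eps * opt -> approx_mean A eps m.
Proof.
move=> eps_ge0 near y.
have opt_le : opt <= kmeans_cost A y.
  by rewrite (kmeans_cost_mean y) lerDl mulr_ge0 ?ler0n ?exprn_ge0 ?enorm_ge0.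
have := opt_ge0; rewrite (kmeans_cost_mean m); nra.
Qed.

Lemma approx_mean_of_median k (mu : 'I_k -> 'rV[RR]_d) (rho eps : RR) m :
  0 <= eps -> 16 * n%:R * rho ^+ 2 <= eps * opt ->
  (4 * #|[set i | (rho < enorm (mu i - mean))%R]| < k)%N ->
  is_geometric_median mu m -> approx_mean A eps m.
Proof.
move=> eps_ge0 rho_small few_far median.
apply: approx_mean_of_near eps_ge0 (le_trans _ rho_small).
have near := geometric_median_near median few_far.
have n_gt0' : 0 < n%:R :> RR by rewrite ltr0n.
have sq_le : enorm (m - mean) ^+ 2 <= 16 * rho ^+ 2.
  by have := enorm_ge0 (m - mean); nra.
nra.
Qed.

Definition sample_mean s (r : {ffun 'I_s -> 'I_n}) : 'rV[RR]_d :=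
  s%:R^-1 *: \sum_(j < s) A (r j).

Lemma sum_sample_mean_dev s : (0 < s)%N ->
  \sum_(r : {ffun 'I_s -> 'I_n}) enorm (sample_mean r - mean) ^+ 2
    = n%:R ^+ s.-1 * opt / s%:R.
Proof.
move=> s_gt0; have s_neq0 : s%:R != 0 :> RR by rewrite pnatr_eq0 -lt0n.
have dev r : sample_mean r - mean = s%:R^-1 *: \sum_(j < s) (A (r j) - mean).
  by rewrite sumrB sumr_const card_ord -(scaler_nat s mean) scalerBr scalerA mulVf // scale1r.
have dev_sqr r : enorm (sample_mean r - mean) ^+ 2
    = s%:R^-1 ^+ 2 * enorm (\sum_(j < s) (A (r j) - mean)) ^+ 2.
  by rewrite dev enormZ exprMn real_normK ?num_real.
rewrite (eq_bigr _ (fun r _ => dev_sqr r)) -mulr_sumr.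
rewrite (sum_ffun_enorm_sum_centered 'I_s sum_subr_mean) !card_ord /kmeans_cost.
by field.
Qed.

Lemma card_far_sample_means s (rho eps : RR) : (0 < s)%N -> 0 <= rho ->
  16 * n%:R * rho ^+ 2 = eps * opt -> 2 ^+ 16 <= eps * s%:R ->
  (2 ^ 12 * #|[set r : {ffun 'I_s -> 'I_n} | (rho < enorm (sample_mean r - mean))%R]|
    <= n ^ s)%N.
Proof.
move=> s_gt0 rho_ge0 rho_sqr s_large.
have rho_large : 2 ^+ 12 * opt <= n%:R * s%:R * rho ^+ 2.
  have := ler_wpM2r opt_ge0 s_large.
  have : 16 * (n%:R * s%:R * rho ^+ 2) = eps * s%:R * opt.
    by rewrite [eps * _ * _]mulrAC -rho_sqr; ring.
  lra.
set far := [set r : {ffun 'I_s -> 'I_n} | (rho < enorm (sample_mean r - mean))%R].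
have n_gt0' : 0 < n%:R :> RR by rewrite ltr0n.
have s_gt0' : 0 < s%:R :> RR by rewrite ltr0n.
have t_gt0 : 0 < 2 ^+ 12 :> RR by rewrite exprn_gt0.
pose N1 : RR := n%:R ^+ s.-1.
have N1_gt0 : 0 < N1 by rewrite exprn_gt0.
pose c : RR := n%:R * N1 / 2 ^+ 12.
have c_gt0 : 0 < c by rewrite divr_gt0 ?mulr_gt0.
have far_markov : far \subset
    [set r | \sum_(r' : {ffun 'I_s -> 'I_n}) enorm (sample_mean r' - mean) ^+ 2
               < c * enorm (sample_mean r - mean) ^+ 2].
  apply/subsetP => r; rewrite !inE sum_sample_mean_dev // -/N1 => far_r.
  have : n%:R * s%:R * rho ^+ 2 < n%:R * s%:R * enorm (sample_mean r - mean) ^+ 2.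
    by rewrite ltr_pM2l ?mulr_gt0 // ltr_pXn2r ?nnegrE ?enorm_ge0.
  move: (enorm _ ^+ 2) => D dev_large.
  have -> : c * D = N1 * (n%:R * s%:R * D) / 2 ^+ 12 / s%:R.
    by rewrite /c; field; rewrite gt_eqF.
  by rewrite ltr_pM2r ?invr_gt0 // ltr_pdivlMr // -[N1 * opt * _]mulrA ltr_pM2l //; lra.
have far_le_c : #|far|%:R <= c.
  apply: le_trans (card_markov c_gt0 (fun r => sqr_ge0 (enorm (sample_mean r - mean)))).
  by rewrite ler_nat; apply: subset_leq_card.
rewrite /c /N1 ler_pdivlMr // -exprS prednK // -!natrX -natrM ler_nat mulnC in far_le_c.
exact: far_le_c.
Qed.

End MeanAndCost.

Lemma card_many_hits (I J : finType) (F : {set J}) :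
  (2 ^ 12 * #|F| <= #|J|)%N ->
  (#|[set f : {ffun I -> J} | #|I| <= 4 * #|[set i | f i \in F]|]| * 4 ^ #|I|
     <= #|J| ^ #|I|)%N.
Proof.
move=> F_rare; set many := [set f : {ffun I -> J} | (#|I| <= 4 * #|[set i | f i \in F]|)%N].
pose g j := ((2 ^ 12) ^ (j \in F))%N.
have weight f : ((f \in many) * 8 ^ #|I| <= \prod_i g (f i))%N.
  have hits : (\sum_i (f i \in F) = #|[set i | f i \in F]|)%N.
    by rewrite -sum_nat_indicator; apply: eq_bigr => i _; rewrite inE.
  rewrite /g -expn_sum hits inE.
  case: (leqP #|I| (4 * #|[set i | f i \in F]|)) => many_hits; last by rewrite mul0n.
  by rewrite mul1n -expnM (_ : 8 = 2 ^ 3)%N // -expnM leq_pexp2l //; lia.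
have g_sum : (\sum_j g j <= 2 * #|J|)%N.
  apply: (@leq_trans (\sum_j (1 + 2 ^ 12 * (j \in F)))).
    by apply: leq_sum => j _; rewrite /g; case: (j \in F).
  rewrite big_split /= -big_distrr /= sum_nat_indicator sum1_card.
  by rewrite (_ : #|xpredT| = #|J|) //; lia.
have : (#|many| * 8 ^ #|I| <= (2 * #|J|) ^ #|I|)%N.
  rewrite -sum_nat_indicator big_distrl /=.
  apply: (@leq_trans (\sum_(f : {ffun I -> J}) \prod_i g (f i))).
    by apply: leq_sum => f _; apply: weight.
  rewrite -(bigA_distr_bigA (fun _ => g)) /= -prod_nat_const.
  by apply: leq_prod => i _.
by rewrite (_ : 8 = 2 * 4)%N // !expnMn mulnCA leq_pmul2l ?expn_gt0.
Qed.

Section Batches.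
Variables k s n : nat.

Definition batches (w : samples k s n) : {ffun 'I_k -> {ffun 'I_s -> 'I_n}} :=
  [ffun i => [ffun j => w (i, j)]].

Lemma batches_bij : bijective batches.
Proof.
exists (fun f : {ffun 'I_k -> {ffun 'I_s -> 'I_n}} =>
          [ffun ij => f ij.1 ij.2] : samples k s n).
  by move=> w; apply/ffunP => -[i j]; rewrite !ffunE.
by move=> f; apply/ffunP => i; apply/ffunP => j; rewrite !ffunE.
Qed.

Lemma card_batches (P : pred {ffun 'I_k -> {ffun 'I_s -> 'I_n}}) :
  #|[set w | P (batches w)]| = #|[set f | P f]|.
Proof.
have [unbatch batchesK unbatchK] := batches_bij.
rewrite -(card_imset _ (can_inj batchesK)); apply: eq_card => f.
rewrite [in RHS]inE; apply/imsetP/idP => [[w] | Pf]; first by rewrite inE => Pw ->.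
by exists (unbatch f); rewrite ?inE unbatchK.
Qed.

Lemma emp_mean_batches d (A : 'I_n -> 'rV[RR]_d) (w : samples k s n) i :
  emp_mean A w i = sample_mean A (batches w i).
Proof.
by rewrite /emp_mean /sample_mean; congr (_ *: _); apply: eq_bigr => j _; rewrite !ffunE.
Qed.

End Batches.

Lemma uprob_ge1B (T : finType) (E : T -> Prop) (B : {set T}) (delta : RR) :
  (0 < #|T|)%N -> (forall w, w \notin B -> E w) -> #|B|%:R <= delta * #|T|%:R ->
  1 - delta <= uprob E.
Proof.
move=> T_gt0 E_off_B B_small; have T_gt0' : 0 < #|T|%:R :> RR by rewrite ltr0n.
have E_large : #|T|%:R - #|B|%:R <= #|[set w | `[< E w >]]|%:R :> RR.
  rewrite -(cardsC B) natrD addrAC subrr add0r ler_nat.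
  by apply: subset_leq_card; apply/subsetP => w; rewrite !inE => /E_off_B /asboolP.
by rewrite /uprob ler_pdivlMr // mulrBl mul1r; lra.
Qed.

Lemma ln4_ge1 : 1 <= ln (4 : RR).
Proof.
have half_gt0 : 0 < 1 + - (1 / 2) :> RR by lra.
have half_gtN1 : -1 < - (1 / 2) :> RR by lra.
have := le_ln1Dx half_gtN1.
have -> : (4 : RR) = (1 + - (1 / 2))^-1 ^+ 2 by field.
by rewrite lnXn ?invr_gt0 // lnV ?posrE //; lra.
Qed.

Lemma ge1_mul_exp4 (delta : RR) (k : nat) :
  0 < delta -> ln delta^-1 <= k%:R -> 1 <= delta * 4 ^+ k.
Proof.
move=> delta_gt0 k_large.
have inv_le : delta^-1 <= 4 ^+ k.
  rewrite -ler_ln ?posrE ?invr_gt0 ?exprn_gt0 // lnXn // -(mulr_natl (ln 4)).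
  by apply: le_trans k_large _; rewrite ler_peMr ?ler0n // ln4_ge1.
apply: le_trans (ler_wpM2l (ltW delta_gt0) inv_le).
by rewrite mulfV ?gt_eqF.
Qed.

Lemma rceil_ge x : 0 <= x -> x <= (rceil x)%:R.
Proof.
by move=> x_ge0; rewrite /rceil natr_absz ger0_norm ?ceil_ge // ceil_ge0; lra.
Qed.

Lemma median_of_sample_means_approx_mean n d (A : 'I_n -> 'rV[RR]_d) k s (eps delta : RR) :
  (0 < n)%N -> (0 < s)%N -> 0 < eps -> 2 ^+ 16 <= eps * s%:R ->
  0 < delta -> ln delta^-1 <= k%:R ->
  1 - delta <= uprob (fun w : samples k s n => forall m,
    is_geometric_median (emp_mean A w) m -> approx_mean A eps m).
Proof.
move=> n_gt0 s_gt0 eps_gt0 s_large delta_gt0 k_large.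
set opt := kmeans_cost A (mean A).
have opt_ge0 : 0 <= opt := opt_ge0 A.
have n_gt0' : 0 < n%:R :> RR by rewrite ltr0n.
pose rho := Num.sqrt (eps * opt / (16 * n%:R)).
have rho_sqr : 16 * n%:R * rho ^+ 2 = eps * opt.
  rewrite sqr_sqrtr; first by field; rewrite gt_eqF.
  by rewrite divr_ge0 ?mulr_ge0 // ltW.
pose far := [set r : {ffun 'I_s -> 'I_n} | (rho < enorm (sample_mean A r - mean A))%R].
have far_rare : (2 ^ 12 * #|far| <= #|{ffun 'I_s -> 'I_n}|)%N.
  by rewrite card_ffun !card_ord (card_far_sample_means n_gt0 s_gt0 (sqrtr_ge0 _) rho_sqr).
pose many_far (f : {ffun 'I_k -> {ffun 'I_s -> 'I_n}}) :=
  (k <= 4 * #|[set i | f i \in far]|)%N.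
pose bad := [set w | many_far (batches w)].
have good w : w \notin bad ->
    forall m, is_geometric_median (emp_mean A w) m -> approx_mean A eps m.
  rewrite inE /many_far -ltnNge => few_far m.
  have rho_small : 16 * n%:R * rho ^+ 2 <= eps * opt by rewrite rho_sqr.
  apply: (approx_mean_of_median n_gt0 (ltW eps_gt0) rho_small).
  suff -> : [set i | (rho < enorm (emp_mean A w i - mean A))%R]
      = [set i | batches w i \in far] by [].
  by apply/setP => i; rewrite !inE emp_mean_batches.
have bad_rare : (#|bad| * 4 ^ k <= (n ^ s) ^ k)%N.
  rewrite card_batches.
  by have := card_many_hits 'I_k far_rare; rewrite card_ffun !card_ord.
have card_T : #|samples k s n| = ((n ^ s) ^ k)%N.
  by rewrite card_ffun card_prod !card_ord -expnM mulnC.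
have T_gt0 : (0 < #|samples k s n|)%N by rewrite card_T !expn_gt0 n_gt0.
apply: (uprob_ge1B T_gt0 good); rewrite card_T.
have := ge1_mul_exp4 delta_gt0 k_large.
move: bad_rare; rewrite -(ler_nat RR) natrM natrX.
move: (#|bad|%:R) (((n ^ s) ^ k)%:R) (ler0n RR #|bad|) => b N b_ge0 bad_rare exp_large.
nra.
Qed.

Theorem corollary3p6 :
  exists a b : RR, 0 < a /\ 0 < b /\
  forall (n d : nat) (A : 'I_n -> 'rV[RR]_d) (eps delta : RR),
    (0 < n)%N -> 0 < eps < 1 -> 0 < delta < 1 ->
    let k := rceil (b * ln (delta^-1)) in
    let s := rceil (a / eps) in
    uprob (fun w : samples k s n =>
             forall m : 'rV[RR]_d,
               is_geometric_median (emp_mean A w) m -> approx_mean A eps m)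
      >= 1 - delta.
Proof.
exists (2 ^+ 16), 1; split; first by rewrite exprn_gt0.
split; first exact: ltr01.
move=> n d A eps delta n_gt0 /andP[eps_gt0 _] /andP[delta_gt0 delta_lt1].
have s_large : 2 ^+ 16 / eps <= (rceil (2 ^+ 16 / eps))%:R.
  by apply: rceil_ge; rewrite divr_ge0 ?exprn_ge0 ?ltW.
have s_gt0 : (0 < rceil (2 ^+ 16 / eps))%N.
  by rewrite -(ltr0n RR); apply: lt_le_trans s_large; rewrite divr_gt0 ?exprn_gt0.
apply: median_of_sample_means_approx_mean => //.
  by rewrite mulrC -ler_pdivrMr.
rewrite -{1}[ln _]mul1r; apply: rceil_ge.
by rewrite mul1r ln_ge0 // invf_ge1 ?ltW.
Qed.
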